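(* Let $\mathcal{X}=\{\mathbf{x}_1,\dots,\mathbf{x}_N\}\subset\mathbb{R}^d$ with $N\ge2$ and with pairwise distinct points, i.e. $\mathbf{x}_i\neq\mathbf{x}_j$ for $i\ne j$. Define the leave-one-out (LOO) total log-likelihood of the adaptive KDE model $$L_{\text{LOO}}(\sigma_1,\dots,\sigma_N)=\sum_{i=1}^N\log\sum_{j\neq i}\mathcal{N}(\mathbf{x}_i;\mathbf{x}_j,\sigma_j^2\mathbf{I}),\qquad \sigma\in(0,\infty)^N.$$ Then there exists $\varepsilon>0$, depending only on the dataset, such that every maximizer $\sigma^*\in(0,\infty)^N$ of $L_{\text{LOO}}$ satisfies $\sigma_j^*\ge\varepsilon$ for all $j=1,\dots,N$. In particular, no optimal solution of the LOO maximum log-likelihood problem exhibits data-copying (no bandwidth tends to $0^+$).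
   Context: $\mathcal{N}(\mathbf{x};\boldsymbol\mu,\sigma^2\mathbf{I})=(2\pi\sigma^2)^{-d/2}\exp\!\big(-\lVert\mathbf{x}-\boldsymbol\mu\rVert^2/(2\sigma^2)\big)$ denotes the isotropic Gaussian density on $\mathbb{R}^d$. ''Data-copying'' means that some bandwidth $\sigma_j\to0^+$. *)

From HB Require Import structures.
From mathcomp Require Import all_boot all_order all_algebra.
From mathcomp Require Import all_classical all_reals all_analysis.
Set Implicit Arguments. Unset Strict Implicit. Unset Printing Implicit Defensive.
Import Order.TTheory GRing.Theory Num.Theory.
Local Open Scope ring_scope.

Definition sqdist (R : realType) (d : nat) (x mu : 'I_d -> R) : R :=
  \sum_(k < d) (x k - mu k) ^+ 2.

Definition gauss (R : realType) (d : nat) (x mu : 'I_d -> R) (s : R) : R :=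
  ((Num.sqrt (2 * pi * s ^+ 2)) ^+ d)^-1 * expR (- sqdist x mu / (2 * s ^+ 2)).

Definition L_LOO (R : realType) (d N : nat) (X : 'I_N -> 'I_d -> R)
  (sigma : 'I_N -> R) : R :=
  \sum_(i < N) ln (\sum_(j < N | j != i) gauss (X i) (X j) (sigma j)).

(* Below a dataset-dependent scale the Gaussian kernel is strictly increasing
   in its bandwidth: for a^2 < b^2 <= |x - mu|^2 / (2 (d+1)) the loss of the
   prefactor, (b/a)^d, is beaten by the gain of the exponential factor.  Hence
   if some sigma_j lies below eps := sqrt (m / (2 (d+1))), m the least squared
   distance between two data points, raising sigma_j to eps strictly increases
   every term in which kernel j occurs (there is at least one, as N >= 2) and
   leaves the others unchanged, so sigma was not a maximizer. *)
From HB Require Import structures.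
From mathcomp Require Import all_boot all_order all_algebra.
From mathcomp Require Import all_classical all_reals all_analysis.
From mathcomp Require Import ring lra zify.
Import Order.TTheory GRing.Theory Num.Theory.
Local Open Scope ring_scope.

Lemma exprn_lt_expR (R : realType) (d : nat) (u k : R) :
  1 < u -> d.+1%:R <= k -> u ^+ d < expR (k * (u ^+ 2 - 1)).
Proof.
move=> u_gt1 k_ge.
have u2B1_gt0 : 0 < u ^+ 2 - 1 by rewrite subr_gt0 exprn_egt1.
apply: (@lt_le_trans _ _ ((u ^+ 2) ^+ d.+1)).
  by rewrite -exprM ltr_eXn2l //; lia.
apply: (@le_trans _ _ (expR (d.+1%:R * (u ^+ 2 - 1)))); last first.
  by rewrite ler_expR ler_pM2r.
rewrite expRM_natl lerXn2r ?nnegrE ?exprn_ge0 ?expR_ge0 //; first lra.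
by have := expR_ge1Dx (u ^+ 2 - 1); rewrite addrC subrK.
Qed.

Lemma gaussE (R : realType) (d : nat) (x mu : 'I_d -> R) (s : R) : 0 < s ->
  gauss x mu s =
    (Num.sqrt (2 * pi) * s) ^- d * expR (- sqdist x mu / (2 * s ^+ 2)).
Proof.
move=> s_gt0; rewrite /gauss sqrtrM ?sqrtr_sqr ?gtr0_norm //.
by rewrite mulr_ge0 // ltW // pi_gt0.
Qed.

Lemma gauss_gt0 (R : realType) (d : nat) (x mu : 'I_d -> R) (s : R) :
  0 < s -> 0 < gauss x mu s.
Proof.
move=> s_gt0; rewrite gaussE // mulr_gt0 ?expR_gt0 // invr_gt0 exprn_gt0 //.
by rewrite mulr_gt0 // sqrtr_gt0 mulr_gt0 // pi_gt0.
Qed.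

Lemma gauss_lt (R : realType) (d : nat) (x mu : 'I_d -> R) (a b : R) :
  0 < a -> a < b -> 2 * d.+1%:R * b ^+ 2 <= sqdist x mu ->
  gauss x mu a < gauss x mu b.
Proof.
move=> a_gt0 ab b_small; have b_gt0 : 0 < b by apply: lt_trans ab.
rewrite !gaussE //; set D := sqdist x mu in b_small *.
set c := Num.sqrt (2 * pi); set u := b / a; set k := D / (2 * b ^+ 2).
have c_gt0 : 0 < c by rewrite sqrtr_gt0 mulr_gt0 // pi_gt0.
have u_gt1 : 1 < u by rewrite ltr_pdivlMr // mul1r.
have k_ge : d.+1%:R <= k.
  by rewrite ler_pdivlMr ?mulr_gt0 ?exprn_gt0 // mulrA (mulrC _ 2).
have bE : b = u * a by rewrite divfK // gt_eqF.
have expbE : expR (- D / (2 * b ^+ 2)) = expR (- k) by rewrite mulNr.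
have expaE : expR (- D / (2 * a ^+ 2)) = expR (- k) / expR (k * (u ^+ 2 - 1)).
  rewrite -expRB; congr expR; rewrite /k bE; field.
  by rewrite !gt_eqF // (lt_trans ltr01).
have prefE : (c * b) ^- d = (c * a) ^- d / u ^+ d.
  by rewrite bE mulrCA exprMn invfM mulrC.
rewrite expbE expaE prefE [X in _ < X]mulrAC [X in X < _]mulrA.
rewrite ltr_pM2l ?mulr_gt0 ?expR_gt0 ?invr_gt0 ?exprn_gt0 ?mulr_gt0 //.
rewrite ltf_pV2 ?posrE ?expR_gt0 ?exprn_gt0 ?(lt_trans ltr01) //.
exact: exprn_lt_expR.
Qed.

Lemma sqdist_gt0 (R : realType) (d : nat) (x mu : 'I_d -> R) :
  x <> mu -> 0 < sqdist x mu.
Proof.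
move=> x_neq_mu; rewrite lt_def sumr_ge0 ?andbT => [|k _]; last exact: sqr_ge0.
apply/eqP => /psumr_eq0P sq_eq0; apply: x_neq_mu; apply: funext => k.
by apply/eqP; rewrite -subr_eq0 -sqrf_eq0; apply/eqP/sq_eq0 => // i _; apply: sqr_ge0.
Qed.

(* Capped at 1 only so that the minimum over an index set that may be empty is
   well defined. *)
Definition min_sqdist {R : realType} {d N : nat} (X : 'I_N -> 'I_d -> R) : R :=
  \big[Num.min/1]_(p : 'I_N * 'I_N | p.1 != p.2) sqdist (X p.1) (X p.2).

Lemma min_sqdist_gt0 {R : realType} {d N : nat} {X : 'I_N -> 'I_d -> R} :
  injective X -> 0 < min_sqdist X.
Proof.
move=> X_inj; apply: lt_bigmin => // p p1_neq_p2; apply: sqdist_gt0.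
by move=> /X_inj /eqP; apply/negP.
Qed.

Lemma min_sqdist_le {R : realType} {d N : nat} (X : 'I_N -> 'I_d -> R)
    (i k : 'I_N) :
  i != k -> min_sqdist X <= sqdist (X i) (X k).
Proof. by move=> ik; exact: (@bigmin_le_cond _ _ _ _ (i, k)). Qed.

Lemma exists_ord_neq {N : nat} (i : 'I_N) : (1 < N)%N -> exists k : 'I_N, k != i.
Proof.
move=> N_gt1; have N_gt0 : (0 < N)%N by apply: ltnW.
have [i0|i_neq0] := eqVneq (val i) 0%N.
  by exists (Ordinal N_gt1); rewrite -val_eqE i0.
by exists (Ordinal N_gt0); rewrite -val_eqE eq_sym.
Qed.

Section LeaveOneOut.
Context {R : realType} {d N : nat} (X : 'I_N -> 'I_d -> R).
Hypothesis N_gt1 : (1 < N)%N.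

Lemma loo_density_gt0 {sigma : 'I_N -> R} (i : 'I_N) : (forall k, 0 < sigma k) ->
  0 < \sum_(k < N | k != i) gauss (X i) (X k) (sigma k).
Proof.
move=> sigma_gt0; have [k ki] := exists_ord_neq i N_gt1.
rewrite (bigD1 k) //= ltr_pwDl ?gauss_gt0 // sumr_ge0 // => l _.
exact/ltW/gauss_gt0.
Qed.

Lemma L_LOO_lt (sigma tau : 'I_N -> R) (i j : 'I_N) :
  (forall k, 0 < sigma k) ->
  (forall i' k, k != i' ->
     gauss (X i') (X k) (sigma k) <= gauss (X i') (X k) (tau k)) ->
  j != i -> gauss (X i) (X j) (sigma j) < gauss (X i) (X j) (tau j) ->
  L_LOO X sigma < L_LOO X tau.
Proof.
move=> sigma_gt0 le_kernel ji lt_kernel.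
have le_density i' : \sum_(k < N | k != i') gauss (X i') (X k) (sigma k) <=
    \sum_(k < N | k != i') gauss (X i') (X k) (tau k).
  by apply: ler_sum => k; apply: le_kernel.
have tau_density_gt0 i' : 0 < \sum_(k < N | k != i') gauss (X i') (X k) (tau k).
  exact: lt_le_trans (loo_density_gt0 i' sigma_gt0) (le_density i').
rewrite /L_LOO (bigD1 i) //= [X in _ < X](bigD1 i) //=; apply: ltr_leD.
  rewrite ltr_ln ?posrE ?tau_density_gt0 ?loo_density_gt0 //.
  rewrite (bigD1 j) //= [X in _ < X](bigD1 j) //=; apply: ltr_leD => //.
  by apply: ler_sum => k /andP [ki _]; apply: le_kernel.
by apply: ler_sum => i' _; rewrite ler_ln ?posrE ?tau_density_gt0 ?loo_density_gt0.
Qed.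

End LeaveOneOut.

Theorem theorem2 (R : realType) (d N : nat) (X : 'I_N -> 'I_d -> R) :
  (2 <= N)%N ->
  injective X ->
  exists eps : R, 0 < eps /\
    forall sigma : 'I_N -> R,
      (forall j, 0 < sigma j) ->
      (forall tau : 'I_N -> R, (forall j, 0 < tau j) ->
         L_LOO X tau <= L_LOO X sigma) ->
      forall j, eps <= sigma j.
Proof.
move=> N_ge2 X_inj; have m_gt0 := min_sqdist_gt0 X_inj.
have scale_gt0 : 0 < min_sqdist X / (2 * d.+1%:R) by rewrite divr_gt0 ?mulr_gt0.
set eps := Num.sqrt (min_sqdist X / (2 * d.+1%:R)).
have eps_gt0 : 0 < eps by rewrite sqrtr_gt0.
have eps_small i k : i != k -> 2 * d.+1%:R * eps ^+ 2 <= sqdist (X i) (X k).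
  move=> ik; rewrite sqr_sqrtr ?(ltW scale_gt0) // mulrC divfK ?mulf_neq0 ?pnatr_eq0 //.
  exact: min_sqdist_le.
exists eps; split => // sigma sigma_gt0 sigma_max j.
rewrite leNgt; apply/negP => sigma_j_lt.
pose tau k := if k == j then eps else sigma k.
have tau_gt0 k : 0 < tau k by rewrite /tau; case: ifP.
have le_kernel i k : k != i -> gauss (X i) (X k) (sigma k) <= gauss (X i) (X k) (tau k).
  move=> ki; rewrite /tau; case: eqP => [kj|//]; rewrite kj in ki *.
  by rewrite ltW // gauss_lt // eps_small // eq_sym.
have [i ij] := exists_ord_neq j N_ge2.
have := sigma_max tau tau_gt0; apply/negP; rewrite -ltNge.
apply: (L_LOO_lt X N_ge2 sigma tau i j sigma_gt0 le_kernel).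
  by rewrite eq_sym.
by rewrite /tau eqxx gauss_lt // eps_small.
Qed.
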